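(* Let $G=(V,E)$ be a finite undirected graph, let $k>2$ be an integer, and let $C$ be a legitimate configuration (as defined in the context). Then: (i) for every node $u\in V$, $d_u=\mathrm{dist}(u,S(C))$; (ii) $S(C)$ is a $(k,k-1)$-ruling set of $G$.
   Context: $\mathrm{dist}(u,v)$ is the graph distance in $G$, $N(u)$ is the set of neighbours of $u$, and for $S\subseteq V$, $\mathrm{dist}(u,S)=\min_{s\in S}\mathrm{dist}(u,s)$. A set $S\subseteq V$ is an $(a,b)$-ruling set if any two distinct nodes of $S$ are at distance at least $a$ and every node of $V$ is at distance at most $b$ from some node of $S$. Let $m=\lfloor k/2\rfloor$. A configuration $C$ assigns to each node $u$ the values $d_u\in\{0,\dots,k-1\}$, $err_u\in\{0,1\}$, and for each $i\in\{1,\dots,m-1\}$ a clock value $c_{i,u}\in\mathbb{Z}/4\mathbb{Z}$ and an arrow $b_{i,u}\in\{\uparrow,\downarrow\}$. Let $S(C)=\{u\in V: d_u=0\}$. Predicates on a node $u$: - $\mathrm{well\_defined}(u)$: $err_u=0$, $|d_u-d_v|\le 1$ for all $v\in N(u)$, and if $d_u>0$ then some $v\in N(u)$ has $d_v=d_u-1$. - $\mathrm{leader\_down}(u)$: if $d_u=0$ then $b_{i,u}=\downarrow$ for all $i\in\{1,\dots,m-1\}$. - $\mathrm{bc\_up}(u,i)$: for every $v\in N(u)$ with $d_v=d_u-1$, $(b_{i,u},b_{i,v},c_{i,v})\in\{(\uparrow,\uparrow,c_{i,u}),(\uparrow,\downarrow,c_{i,u}),(\uparrow,\downarrow,c_{i,u}+1),(\downarrow,\downarrow,c_{i,u})\}$.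 - $\mathrm{bc\_down}(u,i)$: for every $v\in N(u)$ with $d_v=d_u+1$, $(b_{i,u},b_{i,v},c_{i,v})\in\{(\uparrow,\uparrow,c_{i,u}),(\downarrow,\uparrow,c_{i,u}),(\downarrow,\uparrow,c_{i,u}-1),(\downarrow,\downarrow,c_{i,u})\}$. - $\mathrm{branch\_coherence}(u)$: either $d_u\ge m$, or ($\mathrm{bc\_up}(u,d_u)$ holds, and $\mathrm{bc\_up}(u,i)$ and $\mathrm{bc\_down}(u,i)$ hold for all $i\in\{d_u+1,\dots,m-1\}$). (For $d_u=0$ the condition $\mathrm{bc\_up}(u,0)$ is vacuous.) Clock arithmetic is in $\mathbb{Z}/4\mathbb{Z}$. A configuration $C$ is legitimate if every node $u$ satisfies $\mathrm{well\_defined}(u)$, $\mathrm{leader\_down}(u)$ and $\mathrm{branch\_coherence}(u)$, and any two distinct nodes of $S(C)$ are at distance at least $k$ in $G$. *)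

From mathcomp Require Import all_boot all_algebra.
Set Implicit Arguments. Unset Strict Implicit. Unset Printing Implicit Defensive.
Import GRing.Theory.

Definition undirected (T : finType) (e : rel T) := symmetric e /\ irreflexive e.

Definition walk (T : finType) (e : rel T) (u v : T) (n : nat) : Prop :=
  exists p : seq T, [/\ path e u p, last u p = v & size p = n].

(* dist(u,v) >= a  (true also when dist is infinite) *)
Definition dist_ge (T : finType) (e : rel T) (u v : T) (a : nat) : Prop :=
  forall n, walk e u v n -> a <= n.

Definition dist_to_set (T : finType) (e : rel T) (u : T) (S : T -> Prop) (n : nat) : Prop :=
  (exists2 s, S s & walk e u s n) /\ (forall s m, S s -> walk e u s m -> n <= m).

Definition ruling_set (T : finType) (e : rel T) (S : T -> Prop) (a b : nat) : Prop :=
  (forall s t, S s -> S t -> s <> t -> dist_ge e s t a) /\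
  (forall u, exists s, exists2 n, S s & n <= b /\ walk e u s n).

Inductive arrow := Up | Down.

(* A configuration: d_u, err_u, clocks c_{i,u} in Z/4Z, arrows b_{i,u}
   (the clocks/arrows are given for all i : nat; only i in {1..m-1} are used). *)
Record config (T : finType) := Config {
  dv : T -> nat;
  err : T -> bool;
  clk : nat -> T -> 'Z_4;
  arr : nat -> T -> arrow }.

Definition Sset (T : finType) (C : config T) : T -> Prop := fun u => dv C u = 0.

Definition mhalf (k : nat) := k./2.

Section Preds.
Variables (T : finType) (e : rel T) (k : nat) (C : config T).
Local Notation d := (dv C).
Local Notation c := (clk C).
Local Notation b := (arr C).
Local Open Scope ring_scope.

Definition well_defined (u : T) : Prop :=
  err C u = false /\
  (forall v, e u v -> (d u <= (d v).+1)%N /\ (d v <= (d u).+1)%N) /\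
  ((0 < d u)%N -> exists v, e u v /\ (d v).+1 = d u).

Definition leader_down (u : T) : Prop :=
  d u = 0%N -> forall i, (1 <= i <= (mhalf k).-1)%N -> b i u = Down.

Definition bc_up (u : T) (i : nat) : Prop :=
  forall v, e u v -> (d v).+1 = d u ->
    [\/ (b i u = Up /\ b i v = Up /\ c i v = c i u),
        (b i u = Up /\ b i v = Down /\ c i v = c i u),
        (b i u = Up /\ b i v = Down /\ c i v = c i u + 1) |
        (b i u = Down /\ b i v = Down /\ c i v = c i u)].

Definition bc_down (u : T) (i : nat) : Prop :=
  forall v, e u v -> d v = (d u).+1 ->
    [\/ (b i u = Up /\ b i v = Up /\ c i v = c i u),
        (b i u = Down /\ b i v = Up /\ c i v = c i u),
        (b i u = Down /\ b i v = Up /\ c i v = c i u - 1) |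
        (b i u = Down /\ b i v = Down /\ c i v = c i u)].

Definition branch_coherence (u : T) : Prop :=
  (mhalf k <= d u)%N \/
  (bc_up u (d u) /\
   forall i, ((d u).+1 <= i <= (mhalf k).-1)%N -> bc_up u i /\ bc_down u i).

Definition legitimate : Prop :=
  (forall u, (d u < k)%N) /\
  (forall u, well_defined u /\ leader_down u /\ branch_coherence u) /\
  (forall s t, Sset C s -> Sset C t -> s <> t -> dist_ge e s t k).
End Preds.

From mathcomp Require Import all_boot all_algebra.

Set Implicit Arguments.
Unset Strict Implicit.
Unset Printing Implicit Defensive.

(* Well-definedness says that [d] changes by at most one along each edge and
   that every node with [d_u > 0] has a neighbour one step lower.  Descending
   greedily gives a walk of length [d_u] from [u] to [S(C)], while the
   Lipschitz bound shows that no walk from [u] to a zero of [d] is shorter.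
   Domination within [k - 1] then follows from [d_u < k], and the separation of
   [S(C)] is part of legitimacy. *)

Section Potential.
Variables (T : finType) (e : rel T) (f : T -> nat).

Hypothesis f_lipschitz : forall x y, e x y -> f x <= (f y).+1.

Lemma potential_le_walk u v n : walk e u v n -> f u <= f v + n.
Proof.
case=> p [pth <- <-] {v n}; elim: p u pth => [|y p IHp] u /=; first by rewrite addn0.
case/andP=> e_uy /IHp le_y; rewrite addnS.
by apply: (leq_trans (f_lipschitz e_uy)); rewrite ltnS.
Qed.

Hypothesis f_descent : forall x, 0 < f x -> exists2 y, e x y & (f y).+1 = f x.

Lemma walk_to_zero u : exists2 s, f s = 0 & walk e u s (f u).
Proof.
move fu: (f u) => n; elim: n u fu => [|n IHn] u fu.
  by exists u => //; exists [::].
have /f_descent[y e_uy] : 0 < f u by rewrite fu.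
rewrite fu => -[/IHn [s fs [p [pth lst sz]]]].
by exists s => //; exists (y :: p); rewrite /= e_uy sz.
Qed.

Lemma dist_to_zeros u : dist_to_set e u (fun s => f s = 0) (f u).
Proof.
split; first exact: walk_to_zero.
by move=> s m fs /potential_le_walk; rewrite fs.
Qed.

End Potential.

Lemma legitimate_potential (T : finType) (e : rel T) (k : nat) (C : config T) :
  legitimate e k C ->
  (forall x y, e x y -> dv C x <= (dv C y).+1) /\
  (forall x, 0 < dv C x -> exists2 y, e x y & (dv C y).+1 = dv C x).
Proof.
move=> [_ [wd _]]; split=> x; have [[_ [lip desc]] _] := wd x.
  by move=> y /lip [].
by move=> /desc [y [e_xy fy]]; exists y.
Qed.

Theorem lemma1 (T : finType) (e : rel T) (k : nat) (C : config T) :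
  undirected e -> (2 < k)%N -> legitimate e k C ->
  (forall u, dist_to_set e u (Sset C) (dv C u)) /\
  ruling_set e (Sset C) k (k - 1).
Proof.
move=> _ _ legC; have [lip desc] := legitimate_potential legC.
have [d_lt_k [_ separated]] := legC.
split; first by move=> u; exact: dist_to_zeros.
split=> [|u]; first exact: separated.
have [s ds walk_us] := walk_to_zero desc u.
exists s, (dv C u) => //; split=> //.
by rewrite subn1 -ltnS (ltn_predK (d_lt_k u)).
Qed.
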